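(* For any $T\in\mathbb{N}$ and $n,m\in\mathbb{N}_+$ there exist a constant $C(n)$ depending only on $n$, reals $\alpha_1,\dots,\alpha_m$ and $\beta_1,\dots,\beta_m>0$ such that, with $\phi(t;B)=\sum_{k=1}^m\alpha_ke^{-\beta_k(t-B)}$, $$\max_{1\le B\le T}\ \sum_{t=0}^\infty\big|\mathbb{I}\{t=B\}-\phi(t;B)\big|\le\frac{C(n)e^{0.01(n+1)T}}{m^n},$$ where the maximum is over integers $B$.
   Context: $\mathbb{I}\{\cdot\}$ denotes the indicator function. *)

From HB Require Import structures.
From mathcomp Require Import all_boot all_order all_algebra.
From mathcomp Require Import all_classical all_reals all_analysis.
Set Implicit Arguments. Unset Strict Implicit. Unset Printing Implicit Defensive.
Import Order.TTheory GRing.Theory Num.Theory.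
Local Open Scope ring_scope.

Definition phi (R : realType) (m : nat) (alpha beta : 'I_m -> R) (t B : nat) : R :=
  \sum_(k < m) alpha k * expR (- (beta k * (t%:R - B%:R))).

(* the l^1 error sum_{t>=0} |1{t = B} - phi(t;B)|, as a nonnegative
   extended-real series (always defined) *)
Definition err (R : realType) (m : nat) (alpha beta : 'I_m -> R) (B : nat) : \bar R :=
  (\sum_(0 <= t <oo) (`| (t == B)%:R - phi alpha beta t B |)%:E)%E.

From HB Require Import structures.
From mathcomp Require Import all_boot all_order all_algebra.
From mathcomp Require Import all_classical all_reals all_analysis.
From mathcomp Require Import ring lra zify.
Set Implicit Arguments. Unset Strict Implicit. Unset Printing Implicit Defensive.
Import Order.TTheory GRing.Theory Num.Theory.
Local Open Scope ring_scope.

(* If m <= T the right-hand side is at least 1, which is the error of phi = 0.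
   If m > T, take the T+1 nodes x_k = eps (k+1), i.e. beta_k = - ln x_k, and
   alpha_k = (-1)^(T+k) C(T,k) (k+1)^T / T!.  Then
     eps^T T! phi(t;B) = (-1)^T eps^u sum_k (-1)^k C(T,k) (k+1)^u,  u = t+T-B,
   a T-th finite difference of x^u, which vanishes for u < T and is (-1)^T T!
   for u = T.  So phi(.;B) is exactly the indicator of B on t <= B, while for
   t > B it is O((eps m)^(t-B)); shrinking eps makes the error as small as we
   like. *)

Section FiniteDifferences.
Variable R : comPzRingType.

(* [fdiff_pow N u a] is (-1)^N times the N-th forward difference of x ^ u at a. *)
Definition fdiff_pow (N u a : nat) : R :=
  \sum_(k < N.+1) (-1) ^+ k * 'C(N, k)%:R * (k + a)%:R ^+ u.

Lemma fdiff_powS N u a : fdiff_pow N.+1 u a = fdiff_pow N u a - fdiff_pow N u a.+1.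
Proof.
rewrite /fdiff_pow big_ord_recl /= bin0 ?mul1r ?expr0 ?mul1r.
under eq_bigr => i _ do rewrite /bump /= binS natrD mulrDr mulrDl.
rewrite big_split /= [X in _ + (X + _)]big_ord_recr /= bin_small // mulr0 mul0r addr0.
rewrite [in RHS](big_ord_recl N) /= bin0 ?mul1r ?expr0 ?mul1r.
rewrite -sumrN addrA; congr (_ + _ + _); apply: eq_bigr => i _.
by rewrite add1n exprS mulN1r !mulNr addSn addnS.
Qed.

Lemma fdiff_pow_shift N u a :
  fdiff_pow N u a.+1 - fdiff_pow N u a = \sum_(j < u) 'C(u, j)%:R * fdiff_pow N j a.
Proof.
rewrite /fdiff_pow -sumrB (eq_bigr (fun k : 'I_N.+1 => \sum_(j < u)
    'C(u, j)%:R * ((-1) ^+ k * 'C(N, k)%:R * (k + a)%:R ^+ j))) => [|k _].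
  by rewrite exchange_big; apply: eq_bigr => j _; rewrite mulr_sumr.
rewrite addnS -natr1 exprD1n big_ord_recr /= binn mulr1n -mulrBr addrK mulr_sumr.
by apply: eq_bigr => j _; rewrite -mulr_natl; ring.
Qed.

Lemma fdiff_pow_small N u a : (u < N)%N -> fdiff_pow N u a = 0.
Proof.
elim: N u a => // N IH u a uN.
rewrite fdiff_powS -opprB fdiff_pow_shift big1 ?oppr0 // => j _.
by rewrite IH ?mulr0 // (leq_trans (ltn_ord j)).
Qed.

Lemma fdiff_pow_diag N a : fdiff_pow N N a = (-1) ^+ N * N`!%:R.
Proof.
elim: N a => [a|N IH a]; first by rewrite /fdiff_pow big_ord1 /= !expr0 bin0 !mul1r.
rewrite fdiff_powS -opprB fdiff_pow_shift big_ord_recr /= big1 => [|j _].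
  by rewrite add0r IH binSn factS natrM exprS; ring.
by rewrite fdiff_pow_small ?mulr0.
Qed.

End FiniteDifferences.

Lemma norm_fdiff_pow_le (R : numDomainType) N u a :
  `|fdiff_pow R N u a| <= 2 ^+ N * (N + a)%:R ^+ u.
Proof.
have -> : (2 : R) ^+ N = \sum_(k < N.+1) 'C(N, k)%:R.
  by rewrite -[2]/(1 + 1) exprD1n; apply: eq_bigr => k _; rewrite expr1n.
rewrite mulr_suml; apply: le_trans (ler_norm_sum _ _ _) _; apply: ler_sum => k _.
rewrite !normrM normrX normrN normr1 expr1n mul1r !ger0_norm ?exprn_ge0 //.
by rewrite ler_wpM2l // lerXn2r ?nnegrE // ler_nat leq_add2r -ltnS.
Qed.

Section Series.
Variable R : realType.
Local Open Scope ereal_scope.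

Lemma nneseries_delta (B : nat) : \sum_(0 <= t <oo) ((t == B)%:R : R)%:E = 1.
Proof.
rewrite (@nneseriesD1 _ _ B xpredT) //= eqxx eseries0 ?adde0 //.
by move=> t _ /negPf ->.
Qed.

Lemma nneseries_le_geometric (f : nat -> R) (a x : R) : (0 < x < 1)%R ->
  (forall t, 0 <= f t <= a * x ^+ t)%R ->
  \sum_(0 <= t <oo) (f t)%:E <= (a / (1 - x))%:E.
Proof.
move=> /andP[x0 x1] hf; have a0 : (0 <= a)%R.
  by have /andP[f0] := hf 0%N; rewrite expr0 mulr1; apply: le_trans.
apply: lime_le; first by apply: is_cvg_nneseries => t _ _; case/andP: (hf t).
apply: nearW => N; rewrite sumEFin lee_fin.
apply: le_trans (geometric_le_lim N a0 x0 _); last by rewrite ger0_norm // ltW.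
by apply: ler_sum => t _; case/andP: (hf t).
Qed.

End Series.

Lemma expR_ln_mulBn (R : realType) (x : R) (n s t : nat) : 0 < x -> (s <= t + n)%N ->
  expR (ln x * (t%:R - s%:R)) * x ^+ n = x ^+ (t + n - s).
Proof.
move=> x0 st; have xX p : x ^+ p = expR (p%:R * ln x) by rewrite expRM_natl lnK.
rewrite !xX -expRD natrB // natrD; congr expR; ring.
Qed.

Section FiniteDifferenceInterpolation.
Variables (R : realType) (T m : nat) (eps : R).
Hypotheses (Tm : (T < m)%N) (eps_gt0 : 0 < eps) (eps_m_lt1 : eps * m%:R < 1).

Definition fd_alpha (k : 'I_m) : R :=
  (-1) ^+ (T + k) * 'C(T, k)%:R * k.+1%:R ^+ T / T`!%:R.

Definition fd_beta (k : 'I_m) : R := - ln (eps * k.+1%:R).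

Lemma fd_beta_gt0 k : 0 < fd_beta k.
Proof.
rewrite oppr_gt0 ln_lt0 // mulr_gt0 //= (le_lt_trans _ eps_m_lt1) //.
by rewrite ler_pM2l // ler_nat.
Qed.

Lemma phi_fd (t B : nat) : (B <= t + T)%N ->
  phi fd_alpha fd_beta t B * (eps ^+ T * T`!%:R)
  = (-1) ^+ T * eps ^+ (t + T - B) * fdiff_pow R T (t + T - B) 1.
Proof.
move=> BtT; rewrite /fdiff_pow.
rewrite (big_ord_widen m
  (fun k : nat => (-1) ^+ k * 'C(T, k)%:R * (k + 1)%:R ^+ (t + T - B))) //.
rewrite /phi mulr_suml mulr_sumr [RHS]big_mkcond; apply: eq_bigr => k _ /=.
have x0 : 0 < eps * k.+1%:R by rewrite mulr_gt0.
rewrite /fd_alpha /fd_beta mulNr opprK.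
have fact_neq0 : T`!%:R != 0 :> R by rewrite pnatr_eq0 -lt0n fact_gt0.
transitivity ((-1) ^+ (T + k) * 'C(T, k)%:R *
  (expR (ln (eps * k.+1%:R) * (t%:R - B%:R)) * (eps * k.+1%:R) ^+ T)).
  by rewrite exprMn; field.
rewrite expR_ln_mulBn // exprD addn1; case: ltnP => [_|kT]; first by rewrite exprMn; ring.
by rewrite bin_small // !(mulr0, mul0r).
Qed.

Let eps_ge0 : 0 <= eps := ltW eps_gt0.

Let scale_gt0 : 0 < eps ^+ T * T`!%:R.
Proof. by rewrite mulr_gt0 ?exprn_gt0 // ltr0n fact_gt0. Qed.

Lemma phi_fd_lt (t B : nat) : (B <= T)%N -> (t < B)%N -> phi fd_alpha fd_beta t B = 0.
Proof.
move=> BT tB; apply: (mulIf (lt0r_neq0 scale_gt0)).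
by rewrite mul0r phi_fd ?fdiff_pow_small ?mulr0 //; lia.
Qed.

Lemma phi_fd_diag (B : nat) : (B <= T)%N -> phi fd_alpha fd_beta B B = 1.
Proof.
move=> BT; apply: (mulIf (lt0r_neq0 scale_gt0)).
by rewrite mul1r phi_fd ?leq_addr // addKn fdiff_pow_diag -mulrA mulrCA signrMK.
Qed.

Definition fd_const : R := 2 ^+ T * m%:R ^+ T / T`!%:R.

Lemma norm_phi_fd_le (B j : nat) : (B <= T)%N ->
  `|phi fd_alpha fd_beta (B + j.+1) B| <= fd_const * (eps * m%:R) ^+ j.+1.
Proof.
move=> BT; rewrite -(ler_pM2r scale_gt0) -[X in _ * X](ger0_norm (ltW scale_gt0)).
rewrite -normrM phi_fd; last by lia.
have -> : (B + j.+1 + T - B = T + j.+1)%N by lia.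
rewrite !normrM normrX normrN normr1 expr1n mul1r ger0_norm ?exprn_ge0 //.
rewrite [leRHS](_ : _ = eps ^+ (T + j.+1) * (2 ^+ T * m%:R ^+ (T + j.+1))); last first.
  rewrite /fd_const !exprD exprMn; field.
  by rewrite pnatr_eq0 -lt0n fact_gt0.
rewrite ler_wpM2l ?exprn_ge0 // (le_trans (norm_fdiff_pow_le _ _ _ _)) //.
by rewrite ler_wpM2l ?exprn_ge0 // lerXn2r ?nnegrE // ler_nat addn1.
Qed.

Lemma err_fd_le (B : nat) : (B <= T)%N ->
  (err fd_alpha fd_beta B <= (fd_const * (eps * m%:R) / (1 - eps * m%:R))%:E)%E.
Proof.
move=> BT; rewrite /err (nneseries_split 0 B.+1) => [|t _]; last by rewrite lee_fin.
rewrite add0n big_nat_cond big1 => [|t /andP[/andP[_ tB] _]]; last first.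
  have [->|tB'] := eqVneq t B; first by rewrite phi_fd_diag // subrr normr0.
  by rewrite phi_fd_lt ?subr0 ?normr0 // ltn_neqAle tB' -ltnS.
rewrite add0e -nneseries_addn => [|t]; last by rewrite lee_fin.
apply: nneseries_le_geometric => [|t].
  by rewrite eps_m_lt1 andbT mulr_gt0 // ltr0n (leq_ltn_trans _ Tm).
rewrite normr_ge0 /= addnS addnC -addnS.
have -> : (B + t.+1 == B) = false by lia.
by rewrite sub0r normrN -mulrA -exprS norm_phi_fd_le.
Qed.

End FiniteDifferenceInterpolation.

Lemma exists_exp_sum_err_le (R : realType) (T m : nat) (d : R) : (T < m)%N -> 0 < d ->
  exists alpha beta : 'I_m -> R,
    (forall k, 0 < beta k) /\ forall B, (B <= T)%N -> (err alpha beta B <= d%:E)%E.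
Proof.
move=> Tm d_gt0; set c := fd_const R T m.
have m_gt0 : (0 : R) < m%:R by rewrite ltr0n (leq_ltn_trans _ Tm).
have c_gt0 : 0 < c by rewrite !divr_gt0 ?mulr_gt0 ?exprn_gt0 // ltr0n fact_gt0.
(* With r := eps m = d / (d + c), the tail bound c r / (1 - r) is exactly d. *)
set eps := d / (d + c) / m%:R.
have eps_m : eps * m%:R = d / (d + c) by rewrite divfK ?lt0r_neq0.
have eps_gt0 : 0 < eps by rewrite !divr_gt0 ?addr_gt0.
have eps_m_lt1 : eps * m%:R < 1 by rewrite eps_m ltr_pdivrMr ?addr_gt0 // mul1r ltrDl.
exists (@fd_alpha R T m), (fd_beta eps); split=> [|B BT]; first exact: fd_beta_gt0.
apply: le_trans (err_fd_le Tm eps_gt0 eps_m_lt1 BT) _; rewrite lee_fin eps_m.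
have dc_neq0 : d + c != 0 by rewrite lt0r_neq0 ?addr_gt0.
have -> : 1 - d / (d + c) = c / (d + c) by field.
rewrite -/c [leLHS](_ : _ = d) ?lexx //; field.
by rewrite dc_neq0 lt0r_neq0.
Qed.

Lemma err_alpha0 (R : realType) (m : nat) (beta : 'I_m -> R) (B : nat) :
  err (fun=> 0) beta B = 1%:E.
Proof.
rewrite /err -(nneseries_delta R B); apply: eq_eseriesr => t _.
by rewrite /phi big1 ?subr0 ?normr_nat // => k _; rewrite mul0r.
Qed.

Lemma exp_bound_ge1 (R : realType) (n T m : nat) : (0 < m)%N -> (m <= T)%N ->
  1 <= 100 ^+ n * expR (n.+1%:R / 100 * T%:R) / m%:R ^+ n :> R.
Proof.
move=> m_gt0 mT; rewrite ler_pdivlMr ?exprn_gt0 ?ltr0n // mul1r.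
have -> : m%:R = 100 * (m%:R / 100) :> R by rewrite mulrC divfK.
rewrite exprMn ler_wpM2l ?exprn_ge0 //.
have m100 : m%:R / 100 <= expR (T%:R / 100) :> R.
  apply: le_trans (expR_ge1Dx _); have : m%:R <= T%:R :> R by rewrite ler_nat.
  lra.
apply: le_trans (lerXn2r n _ _ m100) _; rewrite ?nnegrE ?divr_ge0 ?expR_ge0 //.
rewrite -expRM_natl ler_expR -[n.+1]addn1 natrD.
have : 0 <= T%:R :> R by []. have : 0 <= n%:R :> R by [].
nra.
Qed.

Theorem lemmaF2 (R : realType) (n : nat) : (0 < n)%N ->
  exists C : R, forall (T m : nat), (0 < m)%N ->
    exists alpha beta : 'I_m -> R,
      (forall k, 0 < beta k) /\
      (forall B : nat, (1 <= B <= T)%N ->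
         (err alpha beta B <=
          (C * expR ((n.+1)%:R / 100 * T%:R) / (m%:R ^+ n))%:E)%E).
Proof.
(* The bound holds for n = 0 as well. *)
move=> _; exists (100 ^+ n) => T m m_gt0.
have [mT|Tm] := leqP m T.
  exists (fun=> 0), (fun=> 1); split=> // B _.
  by rewrite err_alpha0 lee_fin exp_bound_ge1.
have bound_gt0 : 0 < 100 ^+ n * expR (n.+1%:R / 100 * T%:R) / m%:R ^+ n :> R.
  by rewrite !mulr_gt0 ?invr_gt0 ?exprn_gt0 ?expR_gt0 ?ltr0n.
have [alpha [beta [beta_gt0 err_le]]] := exists_exp_sum_err_le Tm bound_gt0.
by exists alpha, beta; split=> // B /andP[_ /err_le].
Qed.
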